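(* Let $X$ be a Dedekind complete Riesz space with weak order unit $e$ and conditional expectation operator $T$ with $Te=e$. If $(x_{\alpha})$ is a decreasing net in $X_{+}$ that converges to $0$ in $T$-conditional probability, then $x_{\alpha}\downarrow0$.
   Context: A conditional expectation operator on $X$ is a strictly positive, order continuous linear projection $T$ with $Te=e$ whose range is a Dedekind complete Riesz subspace. $x_\alpha\to 0$ in $T$-conditional probability means that for every $\epsilon>0$ the net $TP_{(|x_\alpha|-\epsilon e)^{+}}e$ order converges to $0$, where $P_y$ is the band projection onto the band generated by $y$; order convergence $y_\alpha\to 0$ means $|y_\alpha|$ is eventually dominated by the terms of some net decreasing to $0$. *)

From HB Require Import structures.
From mathcomp Require Import all_boot all_order all_algebra.
From mathcomp Require Import reals.
From Stdlib Require Import ClassicalEpsilon.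

Set Implicit Arguments.
Unset Strict Implicit.
Unset Printing Implicit Defensive.
Import GRing.Theory Num.Theory.
Local Open Scope ring_scope.

Section Riesz.
Variables (R : realType) (X : lmodType R)
  (le : X -> X -> Prop) (join : X -> X -> X).

Definition riesz_space : Prop :=
  (forall x, le x x) /\
  (forall x y, le x y -> le y x -> x = y) /\
  (forall x y z, le x y -> le y z -> le x z) /\
  (forall x y z, le x y -> le (x + z) (y + z)) /\
  (forall (a : R) x y, 0 <= a -> le x y -> le (a *: x) (a *: y)) /\
  (forall x y, [/\ le x (join x y), le y (join x y) &
                forall z, le x z -> le y z -> le (join x y) z]).

Definition meetr (x y : X) : X := - join (- x) (- y).
Definition absr (x : X) : X := join x (- x).
Definition posp (x : X) : X := join x 0.

Definition is_ub (A : X -> Prop) (u : X) := forall a, A a -> le a u.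
Definition is_lb (A : X -> Prop) (u : X) := forall a, A a -> le u a.
Definition is_sup (A : X -> Prop) (s : X) :=
  is_ub A s /\ forall u, is_ub A u -> le s u.
Definition is_inf (A : X -> Prop) (s : X) :=
  is_lb A s /\ forall u, is_lb A u -> le u s.

Definition dedekind_complete : Prop :=
  forall A : X -> Prop, (exists a, A a) -> (exists u, is_ub A u) ->
    exists s, is_sup A s.

Definition disjoint (x y : X) := meetr (absr x) (absr y) = 0.

Definition ideal (A : X -> Prop) : Prop :=
  [/\ A 0, (forall x y, A x -> A y -> A (x + y)),
      (forall (a : R) x, A x -> A (a *: x)) &
      (forall x y, A x -> le (absr y) (absr x) -> A y)].

Definition band (A : X -> Prop) : Prop :=
  ideal A /\
  forall (S : X -> Prop) s, (forall x, S x -> A x) -> is_sup S s -> A s.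

Definition band_gen (y : X) : X -> Prop :=
  fun x => forall B, band B -> B y -> B x.

Definition disj_compl (A : X -> Prop) : X -> Prop :=
  fun x => forall y, A y -> disjoint x y.

(* P_y x : the band projection of x onto the band generated by y
   (exists and is unique in a Dedekind complete Riesz space) *)
Definition band_proj (y x : X) : X :=
  epsilon (inhabits 0)
    (fun p => band_gen y p /\ disj_compl (band_gen y) (x - p)).

Definition weak_unit (e : X) : Prop := le 0 e /\ forall x, band_gen e x.

Definition directed (I : Type) (leI : I -> I -> Prop) : Prop :=
  [/\ (exists i : I, True), (forall i, leI i i),
      (forall i j k, leI i j -> leI j k -> leI i k) &
      (forall i j, exists k, leI i k /\ leI j k)].

Definition decr_to0 (J : Type) (leJ : J -> J -> Prop) (z : J -> X) : Prop :=
  (forall b1 b2, leJ b1 b2 -> le (z b2) (z b1)) /\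
  is_inf (fun w => exists b, z b = w) 0.

Definition order_conv0 (I : Type) (leI : I -> I -> Prop) (y : I -> X) : Prop :=
  exists (J : Type) (leJ : J -> J -> Prop) (z : J -> X),
    [/\ directed leJ, decr_to0 leJ z &
        forall b, exists a0, forall a, leI a0 a -> le (absr (y a)) (z b)].

Definition order_continuous (T : X -> X) : Prop :=
  forall (I : Type) (leI : I -> I -> Prop) (y : I -> X),
    directed leI -> order_conv0 leI y -> order_conv0 leI (fun a => T (y a)).

Definition strictly_positive (T : X -> X) : Prop :=
  forall x, le 0 x -> x <> 0 -> le 0 (T x) /\ T x <> 0.

Definition dc_riesz_subspace (A : X -> Prop) : Prop :=
  [/\ A 0, (forall x y, A x -> A y -> A (x + y)),
      (forall (a : R) x, A x -> A (a *: x)),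
      (forall x y, A x -> A y -> A (join x y)) &
      (forall S : X -> Prop, (exists a, S a) -> (forall x, S x -> A x) ->
         (exists u, A u /\ is_ub S u) ->
         exists s, [/\ A s, is_ub S s & forall u, A u -> is_ub S u -> le s u])].

Definition cond_exp (T : {linear X -> X}) (e : X) : Prop :=
  [/\ strictly_positive T, order_continuous T,
      (forall x, T (T x) = T x), T e = e &
      dc_riesz_subspace (fun y => exists x, T x = y)].

Definition cond_prob_conv0 (T : {linear X -> X}) (e : X)
  (I : Type) (leI : I -> I -> Prop) (x : I -> X) : Prop :=
  forall eps : R, 0 < eps ->
    order_conv0 leI (fun a => T (band_proj (posp (absr (x a) - eps *: e)) e)).

End Riesz.

(* Let u be a lower bound of the net and eps > 0. The element
   q = (u - eps e)^+ ∧ e lies in the band generated by every (x_a - eps e)^+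
   and below e, hence below the band projection of e onto that band. So T q is
   dominated by a net order converging to 0, which forces T q = 0, and q = 0 by
   strict positivity of T. Since e is a weak order unit, (u - eps e)^+ = 0,
   i.e. u <= eps e for every eps > 0, and Dedekind completeness (through the
   Archimedean property) gives u <= 0. *)

From Pilot Require Import Defs.
From mathcomp Require Import all_boot all_order all_algebra.
From mathcomp Require Import reals.
From Stdlib Require Import ClassicalEpsilon Classical.

Set Implicit Arguments.
Unset Strict Implicit.
Unset Printing Implicit Defensive.
Import Order.TTheory GRing.Theory Num.Theory.
Local Open Scope ring_scope.

Section RieszSpace.
Variables (R : realType) (X : lmodType R) (le : X -> X -> Prop) (join : X -> X -> X).
Hypothesis HR : riesz_space le join.

Local Notation "x ⊑ y" := (le x y) (at level 70, no associativity).
Local Notation meet := (meetr join).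
Local Notation abs := (absr join).
Local Notation pos := (posp join).
Local Notation bg := (band_gen le join).

Lemma rlexx x : x ⊑ x. Proof. by case: HR. Qed.
Lemma rle_anti x y : x ⊑ y -> y ⊑ x -> x = y.
Proof. by case: HR => _ [h _]; apply: h. Qed.
Lemma rle_trans x y z : x ⊑ y -> y ⊑ z -> x ⊑ z.
Proof. by case: HR => _ [_ [h _]]; apply: h. Qed.
Lemma rleD2r z x y : x ⊑ y -> x + z ⊑ y + z.
Proof. by case: HR => _ [_ [_ [h _]]]; apply: h. Qed.
Lemma rleZ2l (a : R) x y : 0 <= a -> x ⊑ y -> a *: x ⊑ a *: y.
Proof. by case: HR => _ [_ [_ [_ [h _]]]]; apply: h. Qed.
Lemma rleUl x y : x ⊑ join x y.
Proof. by case: HR => _ [_ [_ [_ [_ h]]]]; case: (h x y). Qed.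
Lemma rleUr x y : y ⊑ join x y.
Proof. by case: HR => _ [_ [_ [_ [_ h]]]]; case: (h x y). Qed.
Lemma rleUx x y z : x ⊑ z -> y ⊑ z -> join x y ⊑ z.
Proof. by case: HR => _ [_ [_ [_ [_ h]]]]; case: (h x y) => _ _; apply. Qed.

Lemma rleD2l z x y : x ⊑ y -> z + x ⊑ z + y.
Proof. by move=> h; rewrite ![z + _]addrC; apply: rleD2r. Qed.
Lemma rleD x y z t : x ⊑ y -> z ⊑ t -> x + z ⊑ y + t.
Proof. by move=> h1 h2; apply: rle_trans (rleD2r z h1) (rleD2l y h2). Qed.
Lemma rsubr_ge0 x y : 0 ⊑ y - x <-> x ⊑ y.
Proof.
split=> h; first by have := rleD2r x h; rewrite add0r subrK.
by have := rleD2r (- x) h; rewrite subrr.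
Qed.
Lemma rsubr_le0 x y : x - y ⊑ 0 <-> x ⊑ y.
Proof.
split=> h; first by have := rleD2r y h; rewrite add0r subrK.
by have := rleD2r (- y) h; rewrite subrr.
Qed.
Lemma rleN2 x y : x ⊑ y -> - y ⊑ - x.
Proof. by move=> /rsubr_ge0 h; apply/rsubr_ge0; rewrite opprK addrC. Qed.
Lemma rleBrDr x y z : x ⊑ y - z <-> x + z ⊑ y.
Proof.
split=> h; first by have := rleD2r z h; rewrite subrK.
by have := rleD2r (- z) h; rewrite addrK.
Qed.

Lemma rjoinC x y : join x y = join y x.
Proof. by apply: rle_anti; apply: rleUx; (apply: rleUl || apply: rleUr). Qed.
Lemma rjoinxx x : join x x = x.
Proof. by apply: rle_anti; [apply: rleUx; apply: rlexx | apply: rleUl]. Qed.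
Lemma rleU2l z x y : x ⊑ y -> join x z ⊑ join y z.
Proof. by move=> h; apply: rleUx; [apply: rle_trans h (rleUl _ _)|apply: rleUr]. Qed.
Lemma rjoinDl z x y : join x y + z = join (x + z) (y + z).
Proof.
apply: rle_anti; last by apply: rleUx; apply: rleD2r; [apply: rleUl|apply: rleUr].
by rewrite -rleBrDr; apply: rleUx; rewrite rleBrDr; [apply: rleUl|apply: rleUr].
Qed.

Lemma rleIl x y : meet x y ⊑ x.
Proof. by rewrite -[x in _ ⊑ x]opprK; apply: rleN2; apply: rleUl. Qed.
Lemma rleIr x y : meet x y ⊑ y.
Proof. by rewrite -[y in _ ⊑ y]opprK; apply: rleN2; apply: rleUr. Qed.
Lemma rlexI x y z : z ⊑ x -> z ⊑ y -> z ⊑ meet x y.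
Proof.
by move=> h1 h2; rewrite -[z]opprK; apply: rleN2; apply: rleUx; apply: rleN2.
Qed.
Lemma rmeetC x y : meet x y = meet y x.
Proof. by rewrite /meetr rjoinC. Qed.
Lemma rmeetxx x : meet x x = x.
Proof. by rewrite /meetr rjoinxx opprK. Qed.
Lemma rleI2l z x y : x ⊑ y -> meet x z ⊑ meet y z.
Proof. by move=> h; apply: rlexI; [apply: rle_trans (rleIl _ _) h|apply: rleIr]. Qed.
Lemma rleI2r z x y : x ⊑ y -> meet z x ⊑ meet z y.
Proof. by move=> h; rewrite ![meet z _]rmeetC; apply: rleI2l. Qed.
Lemma rmeetDl z x y : meet x y + z = meet (x + z) (y + z).
Proof. by rewrite /meetr !opprD -rjoinDl opprD opprK. Qed.
Lemma rjoin_meetD x y : join x y + meet x y = x + y.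
Proof.
have h : join (- x) (- y) + (x + y) = join x y.
  by rewrite rjoinDl addrA addNr add0r addrCA addNr addr0 rjoinC.
by rewrite /meetr -h addrAC subrr add0r.
Qed.

Lemma rabs_ge0 x : 0 ⊑ abs x.
Proof.
have h2 : 0 ⊑ abs x + abs x.
  by rewrite -(subrr x); apply: rleD; [apply: rleUl|apply: rleUr].
have := rleZ2l (_ : 0 <= 2^-1) h2; rewrite scaler0 -[abs x]scale1r -scalerDl scalerA.
by rewrite mulVf ?scale1r ?pnatr_eq0 //; apply; rewrite invr_ge0.
Qed.
Lemma ger0_rabs x : 0 ⊑ x -> abs x = x.
Proof.
move=> h; apply: rle_anti; last exact: rleUl.
apply: rleUx (rlexx x) _; apply: (@rle_trans _ 0) => //.
by rewrite -oppr0; apply: rleN2.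
Qed.
Lemma rabs0 : abs 0 = 0.
Proof. exact/ger0_rabs/rlexx. Qed.
Lemma rabsD_le x y : abs (x + y) ⊑ abs x + abs y.
Proof.
by apply: rleUx; rewrite ?opprD; apply: rleD; (apply: rleUl || apply: rleUr).
Qed.
Lemma rabsZ_le (a : R) x : abs (a *: x) ⊑ `|a| *: abs x.
Proof.
have [a_ge0|a_lt0] := lerP 0 a.
  rewrite ger0_norm //; apply: rleUx; last rewrite -scalerN.
    exact/(rleZ2l a_ge0)/rleUl.
  exact/(rleZ2l a_ge0)/rleUr.
rewrite ltr0_norm //; have Na_ge0 : 0 <= - a by rewrite oppr_ge0 ltW.
apply: rleUx; last by rewrite -scaleNr; apply/(rleZ2l Na_ge0)/rleUl.
by rewrite -[a in a *: x]opprK scaleNr -scalerN; apply/(rleZ2l Na_ge0)/rleUr.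
Qed.
Lemma rpos_ge0 x : 0 ⊑ pos x.
Proof. exact: rleUr. Qed.
Lemma rpos_le_rabs x : pos x ⊑ abs x.
Proof. by apply: rleUx; [apply: rleUl | apply: rabs_ge0]. Qed.

Lemma rjoinZ (k : R) x y : 0 < k -> k *: join x y = join (k *: x) (k *: y).
Proof.
move=> k_gt0; have k_ge0 := ltW k_gt0; have k_neq0 : k != 0 by rewrite gt_eqF.
have kVK (u : X) : k^-1 *: (k *: u) = u by rewrite scalerA mulVf ?scale1r.
apply: rle_anti; last by apply: rleUx; apply: rleZ2l => //; [apply: rleUl|apply: rleUr].
rewrite -[join (k *: x) _]scale1r -(mulfV k_neq0) -scalerA.
apply: rleZ2l => //; rewrite -{1}(kVK x) -{1}(kVK y).
by apply: rleUx; apply: rleZ2l; rewrite ?invr_ge0 //; [apply: rleUl|apply: rleUr].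
Qed.
Lemma rmeetZ (k : R) x y : 0 < k -> k *: meet x y = meet (k *: x) (k *: y).
Proof. by move=> k_gt0; rewrite /meetr scalerN rjoinZ // !scalerN. Qed.

Lemma rmeet_ge0 x y : 0 ⊑ x -> 0 ⊑ y -> 0 ⊑ meet x y.
Proof. exact: rlexI. Qed.
Lemma rmeet_eq0_le x y z : 0 ⊑ x -> x ⊑ y -> 0 ⊑ z -> meet y z = 0 -> meet x z = 0.
Proof.
move=> x_ge0 xy z_ge0 yz; apply: rle_anti; last exact: rmeet_ge0.
by rewrite -yz; apply: rleI2l.
Qed.
Lemma rmeet_eq0D x y z : 0 ⊑ x -> 0 ⊑ y -> 0 ⊑ z ->
  meet x z = 0 -> meet y z = 0 -> meet (x + y) z = 0.
Proof.
move=> x_ge0 y_ge0 z_ge0 xz yz; apply: rle_anti; last first.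
  by apply: rmeet_ge0 => //; rewrite -(addr0 0); apply: rleD.
have h : meet (x + y) z ⊑ meet (x + y) (z + y).
  by apply: rleI2r; rewrite -{1}(addr0 z); apply: rleD2l.
rewrite -rmeetDl xz add0r in h.
by rewrite -yz; apply: rlexI => //; apply: rleIr.
Qed.
Lemma rmeet_eq0Z (c : R) y z : 0 <= c -> 0 ⊑ y -> 0 ⊑ z ->
  meet y z = 0 -> meet (c *: y) z = 0.
Proof.
move=> c_ge0 y_ge0 z_ge0 yz.
have k_gt0 : 0 < c + 1 by rewrite ltr_wpDl.
have le_scale1 u : 0 ⊑ u -> c *: u ⊑ (c + 1) *: u.
  by move=> u_ge0; rewrite scalerDl scale1r -{1}(addr0 (c *: u)); apply: rleD2l.
apply: rle_anti; last by apply: rmeet_ge0 => //; rewrite -(scaler0 _ c); apply: rleZ2l.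
apply: (@rle_trans _ (meet ((c + 1) *: y) ((c + 1) *: z))).
  apply: rlexI; first exact: rle_trans (rleIl _ _) (le_scale1 _ y_ge0).
  apply: rle_trans (rleIr _ _) _; rewrite scalerDl scale1r -{1}(add0r z).
  by apply: rleD2r; rewrite -(scaler0 _ c); apply: rleZ2l.
by rewrite -rmeetZ // yz scaler0; apply: rlexx.
Qed.
Lemma rmeet_eq0_addE x y : 0 ⊑ x -> 0 ⊑ y -> meet x y = 0 <-> x + y ⊑ join x y.
Proof.
move=> x_ge0 y_ge0; rewrite -rjoin_meetD.
split=> [->|h]; first by rewrite addr0; apply: rlexx.
apply: rle_anti; last exact: rmeet_ge0.
by have := rleD2r (- join x y) h; rewrite addrC addKr subrr.
Qed.
Lemma rabs_le_posN x : abs x ⊑ pos x + pos (- x).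
Proof.
apply: rleUx; first by rewrite -{1}(addr0 x); apply: rleD; [apply: rleUl|apply: rleUr].
by rewrite -{1}(add0r (- x)); apply: rleD; [apply: rleUr|apply: rleUl].
Qed.

Lemma is_sup_set0 (S : X -> Prop) s : ~ (exists a, S a) -> is_sup le S s -> s = 0.
Proof.
move=> S0 [_ s_min]; have ubS u : is_ub le S u by move=> a Sa; case: S0; exists a.
apply: rle_anti (s_min 0 (ubS 0)) _.
by have /rsubr_ge0 := s_min (s + s) (ubS _); rewrite addrK.
Qed.

Lemma sup_pos_disjoint w (S : X -> Prop) s : 0 ⊑ w ->
  (forall y, S y -> meet (pos y) w = 0) -> is_sup le S s -> meet (pos s) w = 0.
Proof.
move=> w_ge0 Sw [s_ub s_min]; set J := join (pos s) w.
(* Disjointness of [y^+] and [w] gives [y^+ + w ⊑ y^+ ∨ w ⊑ J]; conversely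
   [s^+ + w ⊑ J] gives disjointness of [s^+] and [w]. *)
have s_le : s ⊑ J - w.
  apply: s_min => y Sy; apply: rle_trans (rleUl y 0) _; apply/rleBrDr.
  have /rmeet_eq0_addE yw := Sw y Sy.
  apply: rle_trans (yw (rpos_ge0 y) w_ge0) _.
  by apply/rleU2l/rleU2l/s_ub.
apply/rmeet_eq0_addE => //; first exact: rpos_ge0.
apply/rleBrDr/rleUx => //; apply/rsubr_ge0; exact: rleUr.
Qed.

Local Notation disj := (Defs.disjoint join).

Lemma band_disjoint w : band le join (disj^~ w).
Proof.
have W_ge0 := rabs_ge0 w.
have disj0 : disj 0 w.
  rewrite /Defs.disjoint rabs0.
  exact: rle_anti (rleIl _ _) (rmeet_ge0 (rlexx 0) W_ge0).
split; first split => //.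
- move=> x y xw yw; apply: (rmeet_eq0_le (rabs_ge0 _) (rabsD_le x y) W_ge0).
  exact: rmeet_eq0D (rabs_ge0 _) (rabs_ge0 _) W_ge0 xw yw.
- move=> a x xw; apply: (rmeet_eq0_le (rabs_ge0 _) (rabsZ_le a x) W_ge0).
  exact: rmeet_eq0Z (normr_ge0 a) (rabs_ge0 x) W_ge0 xw.
- by move=> x y xw yx; apply: rmeet_eq0_le (rabs_ge0 y) yx W_ge0 xw.
move=> S s Sw s_sup.
have [[y0 Sy0]|S0] := classic (exists y, S y); last by rewrite (is_sup_set0 S0 s_sup).
apply: (rmeet_eq0_le (rabs_ge0 _) (rabs_le_posN s) W_ge0).
apply: (rmeet_eq0D (rpos_ge0 _) (rpos_ge0 _) W_ge0).
  apply: (sup_pos_disjoint W_ge0 _ s_sup) => y Sy.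
  exact: rmeet_eq0_le (rpos_ge0 y) (rpos_le_rabs y) W_ge0 (Sw y Sy).
apply: (rmeet_eq0_le (rpos_ge0 _) _ W_ge0 (Sw y0 Sy0)).
apply: rleUx _ (rabs_ge0 y0); apply: rle_trans (rleUr y0 _).
by apply/rleN2; case: s_sup => s_ub _; apply: s_ub.
Qed.

Lemma is_sup_addr_le0 (S : X -> Prop) s t :
  is_sup le S s -> (forall a, S a -> a + t ⊑ s) -> t ⊑ 0.
Proof.
move=> [_ s_min] St; have /rleBrDr : s ⊑ s - t by apply: s_min => a /St /rleBrDr.
by move=> /(rleD2r (- s)); rewrite addrAC !subrr add0r.
Qed.

Lemma band_gen_band y : band le join (bg y).
Proof.
split; first split.
- by move=> B [[B0 _ _ _] _] _.
- move=> a b ya yb B Bband By; have [[_ BD _ _] _] := Bband.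
  exact: BD (ya B Bband By) (yb B Bband By).
- move=> c a ya B Bband By; have [[_ _ BZ _] _] := Bband.
  exact: BZ (ya B Bband By).
- move=> a b ya ba B Bband By; have [[_ _ _ Bsolid] _] := Bband.
  exact: Bsolid (ya B Bband By) ba.
move=> S s Sy s_sup B Bband By; have [_ Bsup] := Bband.
by apply: (Bsup S) s_sup => z /Sy; apply.
Qed.
Lemma band_gen_self y : bg y y.
Proof. by []. Qed.

Lemma band_gen_solid p q : abs q ⊑ abs p -> bg p q.
Proof.
by move=> qp; have [[_ _ _ bg_solid] _] := band_gen_band p; apply: bg_solid qp.
Qed.

Lemma weak_unit_disjoint_eq0 e w :
  weak_unit le join e -> 0 ⊑ w -> meet w e = 0 -> w = 0.
Proof.
move=> [e_ge0 e_unit] w_ge0 we.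
have ew : disj e w by rewrite /Defs.disjoint !ger0_rabs // rmeetC.
by have := e_unit w _ (band_disjoint w) ew; rewrite /Defs.disjoint ger0_rabs // rmeetxx.
Qed.

Hypothesis DC : dedekind_complete le.

Lemma archimedean_le0 e v :
  0 ⊑ e -> (forall eps : R, 0 < eps -> v ⊑ eps *: e) -> v ⊑ 0.
Proof.
move=> e_ge0 v_le.
set S := fun z => exists n : nat, z = n%:R *: v.
have nv_le n : n%:R *: v ⊑ e.
  case: n => [|n]; first by rewrite scale0r.
  have n_gt0 : (0 : R) < n.+1%:R by rewrite ltr0Sn.
  have inv_gt0 : 0 < n.+1%:R^-1 :> R by rewrite invr_gt0.
  have := rleZ2l (ltW n_gt0) (v_le _ inv_gt0).
  by rewrite scalerA mulfV ?scale1r // pnatr_eq0.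
have [s s_sup] : exists s, is_sup le S s.
  by apply: DC; [exists (0%:R *: v), 0%N | exists e => _ [n ->]].
apply: (is_sup_addr_le0 s_sup) => _ [n ->]; case: s_sup => s_ub _.
by apply: s_ub; exists n.+1; rewrite mulrSr scalerDl scale1r.
Qed.

Lemma band_proj_exists p e : 0 ⊑ p -> 0 ⊑ e ->
  exists P, bg p P /\ disj_compl join (bg p) (e - P).
Proof.
move=> p_ge0 e_ge0.
set S := fun z => exists n : nat, z = meet e (n%:R *: p).
have np_ge0 n : 0 ⊑ n%:R *: p by rewrite -(scaler0 _ n%:R); apply: rleZ2l.
have [s s_sup] : exists s, is_sup le S s.
  by apply: DC; [exists (meet e (0%:R *: p)), 0%N | exists e => _ [n ->]; apply: rleIl].
have [s_ub s_min] := s_sup.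
have [[_ _ bgZ bg_solid] bg_sup] := band_gen_band p.
exists s; split.
  apply: (bg_sup S) s_sup => _ [n ->].
  apply: (bg_solid (n%:R *: p)); first by apply: bgZ; apply: band_gen_self.
  by rewrite !ger0_rabs //; [apply: rleIr | apply: rmeet_ge0].
have es_ge0 : 0 ⊑ e - s by apply/rsubr_ge0/s_min => _ [n ->]; apply: rleIl.
suff p_es : disj p (e - s).
  move=> y py; rewrite /Defs.disjoint rmeetC.
  exact: py _ (band_disjoint (e - s)) p_es.
(* [s] is the supremum of the [e ∧ n p], and adding [p ∧ (e - s)] to [e ∧ n p]
   stays below [e ∧ (n + 1) p]. *)
rewrite /Defs.disjoint !ger0_rabs //; apply: rle_anti; last exact: rmeet_ge0.
apply: (is_sup_addr_le0 s_sup) => _ [n ->].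
apply: rle_trans (s_ub _ (ex_intro _ n.+1 erefl)); apply: rlexI.
  have := rleD (s_ub _ (ex_intro _ n erefl)) (rleIr p (e - s)).
  by rewrite [s + _]addrC subrK.
have := rleD (rleIr e (n%:R *: p)) (rleIl p (e - s)).
by rewrite mulrSr scalerDl scale1r.
Qed.

Lemma le_band_proj p e q : 0 ⊑ p -> 0 ⊑ e -> bg p q -> q ⊑ e ->
  q ⊑ band_proj le join p e.
Proof.
move=> p_ge0 e_ge0 pq qe; set P := band_proj le join p e.
have [pP eP_disj] : bg p P /\ disj_compl join (bg p) (e - P).
  exact: (epsilon_spec (inhabits 0) (fun P => bg p P /\ disj_compl join (bg p) (e - P))
    (band_proj_exists p_ge0 e_ge0)).
have [[_ bgD bgZ _] _] := band_gen_band p.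
have p_qP : bg p (q - P) by rewrite -scaleN1r; exact (bgD _ _ pq (bgZ _ _ pP)).
(* [(q - P)^+] lies below [|e - P|] and [|q - P|], which are disjoint. *)
apply/rsubr_le0; apply: rle_trans (rleUl _ 0) _.
rewrite -[X in _ ⊑ X](eP_disj _ p_qP).
apply: rlexI _ (rpos_le_rabs _); apply: rleUx _ (rabs_ge0 _).
exact: rle_trans (rleD2r _ qe) (rleUl _ _).
Qed.

Section StrictlyPositive.
Variable T : {linear X -> X}.
Hypothesis T_pos : strictly_positive le T.

Lemma strictly_positive_ge0 x : 0 ⊑ x -> 0 ⊑ T x.
Proof.
move=> x_ge0; have [->|x_neq0] := classic (x = 0); last by case: (T_pos x_ge0 x_neq0).
by rewrite linear0; apply: rlexx.
Qed.

Lemma strictly_positive_le x y : x ⊑ y -> T x ⊑ T y.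
Proof.
by move=> /rsubr_ge0 xy; apply/rsubr_ge0; rewrite -linearB; apply: strictly_positive_ge0.
Qed.

Lemma strictly_positive_eq0 x : 0 ⊑ x -> T x ⊑ 0 -> x = 0.
Proof.
move=> x_ge0 Tx_le0; apply: NNPP => x_neq0; have [Tx_ge0 Tx_neq0] := T_pos x_ge0 x_neq0.
exact/Tx_neq0/rle_anti.
Qed.

End StrictlyPositive.

Lemma order_conv0_lb_le0 (I : Type) (leI : I -> I -> Prop) (y : I -> X) c :
  directed leI -> order_conv0 le join leI y -> (forall a, c ⊑ y a) -> c ⊑ 0.
Proof.
move=> [_ leII _ _] [J [leJ [z [_ [_ [_ z_inf]] y_le_z]]]] c_lb.
apply: z_inf => _ [b <-]; have [a0 y_le] := y_le_z b.
exact: rle_trans (c_lb a0) (rle_trans (rleUl _ _) (y_le a0 (leII a0))).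
Qed.

Lemma cond_prob_conv0_lb_le (e : X) (T : {linear X -> X})
    (I : Type) (leI : I -> I -> Prop) (x : I -> X) u :
  weak_unit le join e -> strictly_positive le T -> directed leI ->
  cond_prob_conv0 le join T e leI x -> (forall a, u ⊑ x a) ->
  forall eps : R, 0 < eps -> u ⊑ eps *: e.
Proof.
move=> e_unit T_pos I_dir x_conv u_lb eps eps_gt0; have [e_ge0 _] := e_unit.
set w := pos (u - eps *: e).
have q_ge0 : 0 ⊑ meet w e by apply: rmeet_ge0 (rpos_ge0 _) e_ge0.
have Tq_le0 : T (meet w e) ⊑ 0.
  apply: (order_conv0_lb_le0 I_dir (x_conv _ eps_gt0)) => a.
  apply: (strictly_positive_le T_pos).
  apply: le_band_proj (rpos_ge0 _) e_ge0 _ (rleIr _ _).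
  apply: band_gen_solid; rewrite (ger0_rabs q_ge0) (ger0_rabs (rpos_ge0 _)).
  apply: rle_trans (rleIl _ _) _; apply/rleU2l/rleD2r.
  exact: rle_trans (u_lb a) (rleUl _ _).
have w0 : w = 0.
  exact: (weak_unit_disjoint_eq0 e_unit (rpos_ge0 _)
    (strictly_positive_eq0 T_pos q_ge0 Tq_le0)).
by apply/rsubr_le0; rewrite -w0; apply: rleUl.
Qed.

End RieszSpace.

Theorem lemmaS12 (R : realType) (X : lmodType R)
  (le : X -> X -> Prop) (join : X -> X -> X)
  (e : X) (T : {linear X -> X})
  (I : Type) (leI : I -> I -> Prop) (x : I -> X) :
  riesz_space le join ->
  dedekind_complete le ->
  weak_unit le join e ->
  cond_exp le join T e ->
  directed leI ->
  (forall a, le 0%R (x a)) ->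
  (forall a b, leI a b -> le (x b) (x a)) ->
  cond_prob_conv0 le join T e leI x ->
  is_inf le (fun w => exists a, x a = w) 0%R.
Proof.
move=> HR DC e_unit [T_pos _ _ _ _] I_dir x_ge0 _ x_conv.
split=> [_ [a <-] // | u u_lb]; have [e_ge0 _] := e_unit.
apply: (archimedean_le0 HR DC e_ge0).
apply: (cond_prob_conv0_lb_le HR DC e_unit T_pos I_dir x_conv).
by move=> a; apply: u_lb; exists a.
Qed.
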